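(* Let $N=\{1,\ldots,n\}$, let $v$ be a vertex of $\mathscr{BG}_+(n)$, and let $\mathscr{D}=\{S: \varnothing\neq S\subsetneq N,\ v(S)=1\}$ be its associated collection. If $\mathscr{D}\neq\varnothing$, then \[ C(v)=\mathrm{conv}\{\mathbf{1}^{\{i\}}: i\in\textstyle\bigcap\mathscr{D}\}, \] so that the dimension of the core of $v$ is $|\bigcap\mathscr{D}|-1$. If $\mathscr{D}=\varnothing$, then $v=u_N$, whose core is the simplex $\{x\in\mathbb{R}^N_+:\sum_{i\in N}x_i=1\}$.
   Context: A game on $N$ is a map $v:2^N\to\mathbb{R}$ with $v(\varnothing)=0$. $u_N$ is the game with $u_N(N)=1$ and $u_N(S)=0$ for $S\neq N$. $\mathbf{1}^{\{i\}}\in\mathbb{R}^N$ is the $i$-th unit vector. The core is $C(v)=\{x\in\mathbb{R}^N: \sum_{i\in S}x_i\geqslant v(S)\ \forall S,\ \sum_{i\in N}x_i=v(N)\}$. $\mathscr{BG}_+(n)$ is the polytope (in $\mathbb{R}^{2^N\setminus\{\varnothing,N\}}$) of games $v$ with $v\geqslant 0$, $v(N)=1$ and $C(v)\neq\varnothing$. *)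

From mathcomp Require Import all_boot all_order all_algebra.
Set Implicit Arguments. Unset Strict Implicit. Unset Printing Implicit Defensive.
Import Order.TTheory GRing.Theory Num.Theory.
Local Open Scope ring_scope.

Section Defs.
Variables (R : realFieldType) (n : nat).

(* A game v : 2^N -> R (the condition v(emptyset) = 0 is imposed where needed). *)
Definition game := {ffun {set 'I_n} -> R}.

Definition in_core (v : game) (x : 'rV[R]_n) : Prop :=
  (forall S : {set 'I_n}, v S <= \sum_(i in S) x 0 i) /\
  \sum_(i < n) x 0 i = v setT.

Definition in_BGplus (v : game) : Prop :=
  v set0 = 0 /\ v setT = 1 /\ (forall S, 0 <= v S) /\ exists x, in_core v x.

(* Since the coordinates
   v(emptyset)=0 and v(N)=1 are fixed on BG_+(n), identifying games with their
   coordinate vectors indexed by proper nonempty coalitions is harmless. *)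
Definition is_vertex_BGplus (v : game) : Prop :=
  in_BGplus v /\
  forall (w1 w2 : game) (t : R), in_BGplus w1 -> in_BGplus w2 ->
    0 < t < 1 -> (forall S, v S = t * w1 S + (1 - t) * w2 S) -> w1 = w2.

Definition assoc_coll (v : game) : {set {set 'I_n}} :=
  [set S : {set 'I_n} | (S != set0) && (S != setT) && (v S == 1)].

Definition uN : game := [ffun S => if S == setT then 1 else 0].

Definition unitv (i : 'I_n) : 'rV[R]_n := delta_mx 0 i.

Definition in_conv_units (A : {set 'I_n}) (x : 'rV[R]_n) : Prop :=
  exists lam : 'I_n -> R,
    (forall i, 0 <= lam i) /\ \sum_(i in A) lam i = 1 /\
    x = \sum_(i in A) lam i *: unitv i.

End Defs.

From mathcomp Require Import all_boot all_order all_algebra.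
From mathcomp Require Import ring lra.
Set Implicit Arguments. Unset Strict Implicit. Unset Printing Implicit Defensive.
Import Order.TTheory GRing.Theory Num.Theory.
Local Open Scope ring_scope.

(* Moving v(T) up and down shows that every coalition T <> N with v(T) > 0 is tight
   at every point of the core.  Writing v = x_i w1 + (1 - x_i) w2 for a core point x
   with 0 < x_i < 1, where w1(S) = v(S) / x(S) if i \in S and 0 otherwise, shows that
   v = w1, so the core contains a unit vector 1^{i}; tightness at 1^{i} then forces v
   to be 0/1-valued.  The core of a 0/1-valued game with v(N) = 1 is the face of the
   standard simplex spanned by the players lying in every coalition of value 1. *)

Section Sums.
Variables (R : realFieldType) (n : nat).
Implicit Types (f : 'I_n -> R) (A S : {set 'I_n}).

Lemma sum_setT f : \sum_(i in [set: 'I_n]) f i = \sum_i f i.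
Proof. by apply: eq_bigl => i; rewrite in_setT. Qed.

Lemma sum_mul_indicator S f (k : 'I_n) :
  \sum_(j in S) f j * (j == k)%:R = (k \in S)%:R * f k.
Proof.
have [kS|kNS] := boolP (k \in S).
  rewrite (bigD1 k) //= eqxx mulr1 mul1r big1 ?addr0 // => j /andP[_ /negbTE->].
  by rewrite mulr0.
rewrite mul0r big1 // => j jS; have [jk|] := eqVneq j k; last by rewrite mulr0.
by rewrite -jk jS in kNS.
Qed.

Lemma sum_outside_eq0 f S : (forall j, 0 <= f j) ->
  \sum_j f j <= \sum_(j in S) f j -> forall j, j \notin S -> f j = 0.
Proof.
move=> f_ge0 le_sum j jNS.
have out0 : \sum_(k | k \notin S) f k = 0.
  apply/eqP; rewrite eq_le sumr_ge0 // andbT.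
  by move: le_sum; rewrite [X in X <= _](bigID (mem S)) /= gerDl.
exact: (psumr_eq0P (fun k _ => f_ge0 k) out0).
Qed.

Lemma sum_supported f A S : (forall j, j \notin A -> f j = 0) -> A \subset S ->
  \sum_(j in S) f j = \sum_j f j.
Proof.
move=> f0 AS; rewrite [RHS](bigID (mem S)) /= [X in _ = _ + X]big1 ?addr0 // => j jNS.
by apply: f0; apply: contra jNS; apply: (subsetP AS).
Qed.

End Sums.

Section UnitVectors.
Variables (R : realFieldType) (n : nat).

Lemma unitvE (i j : 'I_n) : unitv R i 0 j = (j == i)%:R.
Proof. by rewrite /unitv mxE eqxx. Qed.

Lemma sum_unitv (S : {set 'I_n}) (i : 'I_n) :
  \sum_(j in S) unitv R i 0 j = (i \in S)%:R.
Proof.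
rewrite -[RHS]mulr1 -(sum_mul_indicator S (fun=> 1)).
by apply: eq_bigr => j _; rewrite unitvE mul1r.
Qed.

Lemma sum_scale_unitvE (A : {set 'I_n}) (lam : 'I_n -> R) (k : 'I_n) :
  (\sum_(i in A) lam i *: unitv R i) 0 k = (k \in A)%:R * lam k.
Proof.
rewrite summxE -sum_mul_indicator.
by apply: eq_bigr => i _; rewrite mxE unitvE eq_sym.
Qed.

Definition in_simplex_face (A : {set 'I_n}) (x : 'rV[R]_n) : Prop :=
  [/\ forall i, 0 <= x 0 i, \sum_i x 0 i = 1 & forall i, i \notin A -> x 0 i = 0].

Lemma in_conv_unitsE (A : {set 'I_n}) (x : 'rV[R]_n) :
  in_conv_units A x <-> in_simplex_face A x.
Proof.
split=> [[lam [lam_ge0 [lam_sum ->]]]|[x_ge0 x_sum x_supp]].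
  split=> [i||i iNA]; rewrite ?sum_scale_unitvE.
  - by rewrite mulr_ge0 ?ler0n.
  - under eq_bigr do rewrite sum_scale_unitvE.
    rewrite -[RHS]lam_sum [RHS]big_mkcond /=.
    by apply: eq_bigr => i _; case: (i \in A); rewrite ?mul1r ?mul0r.
  - by rewrite (negbTE iNA) mul0r.
exists (x 0); split=> //; split; first by rewrite (sum_supported x_supp) ?subxx.
apply/rowP => k; rewrite sum_scale_unitvE.
by have [|kNA] := boolP (k \in A); rewrite ?mul1r // mul0r x_supp.
Qed.

End UnitVectors.

Section VertexPerturbation.
Variables (R : realFieldType) (n : nat).
Implicit Types (v : game R n) (T : {set 'I_n}) (y : 'rV[R]_n).

Lemma core_ge0 v y : (forall j, 0 <= v [set j]) -> in_core v y -> forall j, 0 <= y 0 j.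
Proof.
by move=> v_ge0 [y_core _] j; have := y_core [set j]; rewrite big_set1; apply: le_trans.
Qed.

Definition bump_game v T (e : R) : game R n := [ffun S => v S + (S == T)%:R * e].

Lemma bump_game_BGplus v T y e : in_BGplus v -> in_core v y ->
  T != set0 -> T != setT -> - v T <= e <= \sum_(j in T) y 0 j - v T ->
  in_BGplus (bump_game v T e).
Proof.
move=> [v0 [v1 [v_ge0 _]]] [y_core y_sum] T0 TNT /andP[e_lo e_hi].
have bumpE S : bump_game v T e S = if S == T then v T + e else v S.
  by rewrite ffunE; case: eqVneq => [->|]; rewrite ?mul1r ?mul0r ?addr0.
split; first by rewrite bumpE eq_sym (negbTE T0).
split; first by rewrite bumpE eq_sym (negbTE TNT).
split; first by move=> S; rewrite bumpE; case: ifP; rewrite // -lerBlDl sub0r.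
exists y; split=> [S|]; last by rewrite bumpE eq_sym (negbTE TNT).
by rewrite bumpE; case: eqVneq => [->|]; rewrite // -lerBrDl.
Qed.

(* Otherwise v is the midpoint of the two games obtained by moving v(T) by +-e. *)
Lemma vertex_core_tight v T y : is_vertex_BGplus v -> T != setT -> 0 < v T ->
  in_core v y -> \sum_(j in T) y 0 j = v T.
Proof.
move=> [v_BG v_extreme] TNT vT_gt0 y_core.
have T0 : T != set0 by apply: contraTneq vT_gt0 => ->; rewrite v_BG.1 ltxx.
set s := \sum_(j in T) y 0 j.
have [vT_lt_s|] := ltrP (v T) s; last by have := y_core.1 T; rewrite -/s => *; lra.
set e := Num.min (v T) (s - v T).
have e_gt0 : 0 < e by rewrite lt_min vT_gt0 subr_gt0.
have [e_le_vT e_le_gap] : e <= v T /\ e <= s - v T by rewrite !ge_min !lexx orbT.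
have bump_pm : bump_game v T e = bump_game v T (- e).
  apply: (v_extreme _ _ 2^-1).
  - by apply: (bump_game_BGplus _ y_core); rewrite // -/s; apply/andP; split; lra.
  - by apply: (bump_game_BGplus _ y_core); rewrite // -/s; apply/andP; split; lra.
  - by apply/andP; split; lra.
  - by move=> S; rewrite !ffunE; field.
have := congr1 (fun w : game R n => w T) bump_pm; rewrite !ffunE eqxx !mul1r => ?; lra.
Qed.

End VertexPerturbation.

Section RatioGame.
Variables (R : realFieldType) (n : nat) (v : game R n) (x : 'rV[R]_n) (i : 'I_n).
Hypotheses (v0 : v set0 = 0) (v1 : v setT = 1) (v_ge0 : forall S, 0 <= v S).
Implicit Types S : {set 'I_n}.
Hypotheses (x_core : in_core v x) (xi_gt0 : 0 < x 0 i) (xi_lt1 : x 0 i < 1).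

Local Notation a := (x 0 i).
Local Notation xsum S := (\sum_(j in S) x 0 j).

Definition ratio_game : game R n :=
  [ffun S : {set 'I_n} => if i \in S then v S / xsum S else 0].

Definition residual_game : game R n := [ffun S => (v S - a * ratio_game S) / (1 - a)].

Definition residual_point : 'rV[R]_n := \row_j ((x 0 j - a * (j == i)%:R) / (1 - a)).

Let x_ge0 : forall j, 0 <= x 0 j := core_ge0 (fun j => v_ge0 [set j]) x_core.

Let xsum_ge_a S : i \in S -> a <= xsum S.
Proof. by move=> iS; rewrite (bigD1 i) //= lerDl sumr_ge0. Qed.

Let xsum_setT : xsum setT = 1.
Proof. by rewrite sum_setT x_core.2. Qed.

Let ratio_gameE S : i \in S -> ratio_game S * xsum S = v S.
Proof.
move=> iS; rewrite ffunE iS divfK // gt_eqF //.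
exact: lt_le_trans xi_gt0 (xsum_ge_a iS).
Qed.

Let ratio_game_ge0 S : 0 <= ratio_game S.
Proof. by rewrite ffunE; case: ifP => // _; rewrite divr_ge0 ?sumr_ge0. Qed.

Let ratio_game_le1 S : ratio_game S <= 1.
Proof.
rewrite ffunE; case: ifP => iS; last exact: ler01.
rewrite ler_pdivrMr ?mul1r ?x_core.1 //.
exact: lt_le_trans xi_gt0 (xsum_ge_a iS).
Qed.

Lemma ratio_game_core_unitv : in_core ratio_game (unitv R i).
Proof.
split=> [S|]; rewrite -?sum_setT sum_unitv; last first.
  by rewrite in_setT ffunE in_setT v1 xsum_setT divr1.
by case: (boolP (i \in S)) => iS; rewrite ?ratio_game_le1 // ffunE (negbTE iS).
Qed.

Lemma ratio_game_BGplus : in_BGplus ratio_game.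
Proof.
split; first by rewrite ffunE in_set0.
split; first by have [_] := ratio_game_core_unitv; rewrite -sum_setT sum_unitv in_setT.
by split; [exact: ratio_game_ge0 | exists (unitv R i); apply: ratio_game_core_unitv].
Qed.

Let residual_numer_ge0 S : 0 <= v S - a * ratio_game S.
Proof.
case: (boolP (i \in S)) => iS; last by rewrite ffunE (negbTE iS) mulr0 subr0.
by rewrite -(ratio_gameE iS) [a * _]mulrC -mulrBr mulr_ge0 // subr_ge0 xsum_ge_a.
Qed.

Let sum_residual_point S :
  \sum_(j in S) residual_point 0 j = (xsum S - (i \in S)%:R * a) / (1 - a).
Proof.
rewrite -(sum_mul_indicator S (fun=> a)) -sumrB mulr_suml.
by apply: eq_bigr => j _; rewrite mxE.
Qed.

Lemma residual_game_BGplus : in_BGplus residual_game.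
Proof.
have a1_gt0 : 0 < 1 - a by rewrite subr_gt0.
have residual_setT : residual_game setT = 1.
  by rewrite ffunE ratio_game_BGplus.2.1 v1 mulr1 divff // gt_eqF.
split; first by rewrite !ffunE in_set0 v0 mulr0 subr0 mul0r.
split=> //; split; first by move=> S; rewrite ffunE divr_ge0 ?residual_numer_ge0 ?ltW.
exists residual_point; split=> [S|]; last first.
  by rewrite -sum_setT sum_residual_point in_setT mul1r xsum_setT divff // gt_eqF.
rewrite ffunE sum_residual_point ler_pM2r ?invr_gt0 //.
case: (boolP (i \in S)) => iS.
  rewrite -(ratio_gameE iS) [a * _]mulrC -mulrBr mul1r ler_piMl ?ratio_game_le1 //.
  by rewrite subr_ge0 xsum_ge_a.
by rewrite ffunE (negbTE iS) !(mulr0, mul0r, subr0) x_core.1.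
Qed.

Lemma game_split S : v S = a * ratio_game S + (1 - a) * residual_game S.
Proof. by rewrite [residual_game S]ffunE; field; rewrite subr_eq0 gt_eqF. Qed.

End RatioGame.

Section VertexValues.
Variables (R : realFieldType) (n : nat) (v : game R n).
Hypothesis v_vertex : is_vertex_BGplus v.

Lemma vertex_core_unitv : exists i, in_core v (unitv R i).
Proof.
have [[v0 [v1 [v_ge0 [x x_core]]]] v_extreme] := v_vertex.
have x_ge0 := core_ge0 (fun j => v_ge0 [set j]) x_core.
have x_sum : \sum_j x 0 j = 1 by rewrite x_core.2.
have [i xi_gt0] : exists i, 0 < x 0 i.
  apply/existsP; apply: contra_neqT (oner_neq0 R) => /existsPn x_le0.
  rewrite -x_sum big1 // => j _; apply/eqP; rewrite eq_le x_ge0 andbT.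
  by rewrite leNgt x_le0.
exists i; have [xi_lt1|xi_ge1] := ltrP (x 0 i) 1.
  suff -> : v = ratio_game v x i by apply: ratio_game_core_unitv.
  have split_eq := game_split v xi_lt1.
  have xi_01 : 0 < x 0 i < 1 by rewrite xi_gt0 xi_lt1.
  have ratio_residual :=
    v_extreme _ _ _ (ratio_game_BGplus v1 v_ge0 x_core xi_gt0)
      (residual_game_BGplus v0 v1 v_ge0 x_core xi_gt0 xi_lt1) xi_01 split_eq.
  by apply/ffunP => S; rewrite split_eq -ratio_residual; ring.
suff -> : unitv R i = x by [].
have x_out : forall j, j \notin [set i] -> x 0 j = 0.
  by apply: sum_outside_eq0; rewrite // big_set1 x_sum.
apply/rowP => j; rewrite unitvE.
have [->|ji] := eqVneq j i; last by rewrite x_out // in_set1.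
by rewrite -x_sum -(sum_supported x_out (subxx _)) big_set1.
Qed.

(* Tightness at the core point 1^{i} forces v(T) = [i \in T]. *)
Lemma vertex_game01 S : v S = 0 \/ v S = 1.
Proof.
have [[v0 [v1 [v_ge0 _]]] _] := v_vertex.
have [i i_core] := vertex_core_unitv.
have [->|SNT] := eqVneq S setT; first by right.
have [|vS_neq0] := eqVneq (v S) 0; first by left.
have vS_gt0 : 0 < v S by rewrite lt_def vS_neq0 v_ge0.
have := vertex_core_tight v_vertex SNT vS_gt0 i_core; rewrite sum_unitv.
by case: (i \in S) => <-; [right|left].
Qed.

End VertexValues.

Section ZeroOneGames.
Variables (R : realFieldType) (n : nat) (v : game R n).
Hypotheses (v1 : v setT = 1) (v01 : forall S, v S = 0 \/ v S = 1).

Lemma core_zero_one_gameE (x : 'rV[R]_n) :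
  in_core v x <-> in_simplex_face (\bigcap_(S | v S == 1) S) x.
Proof.
have v_ge0 S : 0 <= v S by case: (v01 S) => ->; rewrite ?ler01.
split=> [x_core|[x_ge0 x_sum x_supp]].
  have x_ge0 := core_ge0 (fun j => v_ge0 [set j]) x_core.
  have x_sum : \sum_j x 0 j = 1 by rewrite x_core.2.
  split=> // j jNI.
  have /existsP[S /andP[/eqP vS1 jNS]] : [exists S, (v S == 1) && (j \notin S)].
    apply: contraR jNI => /existsPn no_S; apply/bigcapP => S vS1.
    by have := no_S S; rewrite vS1 negbK.
  by apply: (sum_outside_eq0 x_ge0) jNS; rewrite x_sum -vS1 x_core.1.
have sum_full (S : {set 'I_n}) :
    \bigcap_(T | v T == 1) T \subset S -> \sum_(j in S) x 0 j = 1.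
  by move=> IS; rewrite (sum_supported x_supp IS).
split=> [S|]; last by rewrite v1 x_sum.
have [->|vS1] := v01 S; first exact: sumr_ge0.
by rewrite vS1 sum_full //; apply: bigcap_inf; rewrite vS1.
Qed.

End ZeroOneGames.

Lemma bigcap_assoc_coll (R : realFieldType) (n : nat) (v : game R n) :
  v set0 = 0 -> v setT = 1 ->
  \bigcap_(S in assoc_coll v) S = \bigcap_(S | v S == 1) S.
Proof.
move=> v0 v1; rewrite [RHS](bigD1 setT) ?v1 //= setTI; apply: eq_bigl => S.
rewrite inE; have [->|_] := eqVneq S set0; first by rewrite v0 /= eq_sym oner_eq0.
by rewrite /= andbC.
Qed.

Theorem proposition2 (R : realFieldType) (n : nat) (v : game R n) :
  is_vertex_BGplus v ->
  (assoc_coll v != set0 ->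
     forall x : 'rV[R]_n,
       in_core v x <-> in_conv_units (\bigcap_(S in assoc_coll v) S) x) /\
  (assoc_coll v = set0 ->
     v = uN R n /\
     forall x : 'rV[R]_n,
       in_core v x <-> ((forall i, 0 <= x 0 i) /\ \sum_(i < n) x 0 i = 1)).
Proof.
move=> v_vertex; have [[v0 [v1 _]] _] := v_vertex.
have v01 := vertex_game01 v_vertex.
have coreE x := core_zero_one_gameE v1 v01 x.
rewrite -bigcap_assoc_coll // in coreE.
split=> [_ x|D0]; first by rewrite in_conv_unitsE coreE.
split=> [|x].
  apply/ffunP => S; rewrite ffunE; have [->//|SNT] := eqVneq S setT.
  have [//|vS1] := v01 S; have [S0|S0] := eqVneq S set0; first by rewrite S0.
  by have := in_set0 S; rewrite -D0 inE S0 SNT vS1 eqxx.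
rewrite coreE D0 big_set0 /in_simplex_face.
by split=> [[]|[]]; split=> // i; rewrite in_setT.
Qed.
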